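(* For all integers $s\ge3$ and $k\ge2$ there are infinitely many pairwise non-isomorphic connected graphs $G\in\mathcal G^s_1$ with $v(G)\neq k$ such that $\tau_k(G)=\dfrac{v(G)-k}{sk-k+1}$.
   Context: All graphs are finite and simple. For integers $1\le r\le s$, $\mathcal G^s_r$ denotes the set of graphs in which every vertex has degree at least $r$ and at most $s$. $v(G)$ is the number of vertices of $G$. For an integer $k\ge1$, $\tau_k(G)$ denotes the maximum number of pairwise vertex-disjoint subgraphs of $G$ each of which is a tree with exactly $k$ edges. *)

From mathcomp Require Import all_boot all_order all_algebra.
Set Implicit Arguments. Unset Strict Implicit. Unset Printing Implicit Defensive.

Record sgraph := SGraph {
  vn : nat;
  adj : rel 'I_vn;
  adj_sym : symmetric adj;
  adj_irr : irreflexive adj }.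
Arguments adj : clear implicits.

Definition deg (G : sgraph) (x : 'I_(vn G)) : nat := #|[set y | adj G x y]|.

Definition in_class (r s : nat) (G : sgraph) : Prop :=
  forall x : 'I_(vn G), r <= deg x <= s.

Definition connectedG (G : sgraph) : Prop :=
  forall x y : 'I_(vn G), connect (adj G) x y.

Definition isomorphic (G H : sgraph) : Prop :=
  exists f : 'I_(vn G) -> 'I_(vn H),
    bijective f /\ forall x y, adj H (f x) (f y) = adj G x y.

Definition nedges (n : nat) (E : rel 'I_n) : nat :=
  #|[set p : 'I_n * 'I_n | E p.1 p.2 && (p.1 < p.2)]|.

Definition del_edge (n : nat) (E : rel 'I_n) (a b : 'I_n) : rel 'I_n :=
  fun x y => E x y && ~~ (((x == a) && (y == b)) || ((x == b) && (y == a))).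

(* (S, E) is a subgraph of G that is a tree (connected and acyclic, where
   acyclic = every edge is a bridge) with exactly k edges. *)
Definition tree_subgraph (G : sgraph) (k : nat)
    (S : {set 'I_(vn G)}) (E : rel 'I_(vn G)) : Prop :=
  (symmetric E /\
   (forall x y, E x y -> [&& adj G x y, x \in S & y \in S])) /\
  [/\ S != set0,
      (forall x y, x \in S -> y \in S -> connect E x y),
      (forall a b, E a b -> ~~ connect (del_edge E a b) a b)
    & nedges E = k].
Arguments tree_subgraph : clear implicits.

Definition has_tree_packing (G : sgraph) (k t : nat) : Prop :=
  exists (S : 'I_t -> {set 'I_(vn G)}) (E : 'I_t -> rel 'I_(vn G)),
    (forall i, tree_subgraph G k (S i) (E i)) /\
    (forall i j, i != j -> [disjoint S i & S j]).

Definition is_tau (G : sgraph) (k t : nat) : Prop :=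
  has_tree_packing G k t /\ (forall t', has_tree_packing G k t' -> t' <= t).

(* Take t+1 "centres" and t(s-1)+1 disjoint paths ("blocks") on k vertices,
   and join centre c to the first vertex of blocks c(s-1), ..., c(s-1)+(s-1).
   Consecutive centres share a block, so the graph is connected; centres have
   degree s and block vertices degree at most 3.  A block has only k-1 edges,
   so every tree with k edges contains a centre and tau_k <= t+1; conversely
   centre c followed by block c(s-1) is a path with k edges, giving t+1
   disjoint trees.  Finally v(G) - k = (t+1)(sk-k+1). *)

From mathcomp Require Import all_boot all_order all_algebra zify ring.

Set Implicit Arguments.
Unset Strict Implicit.
Unset Printing Implicit Defensive.

Lemma nedges_subrel n (E E' : rel 'I_n) : subrel E E' -> nedges E <= nedges E'.
Proof.
move=> sEE'; apply/subset_leq_card/subsetP => -[x y].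
by rewrite !inE => /andP[/sEE' -> ->].
Qed.

Lemma isomorphic_vn G H : isomorphic G H -> vn G = vn H.
Proof. by case=> f [/bij_eq_card]; rewrite !card_ord. Qed.

Lemma inord0 n : inord 0 = ord0 :> 'I_n.+1.
Proof. by apply: ord_inj; rewrite inordK. Qed.

Lemma subset_leq_card_size (T : finType) (A : {pred T}) (r : seq T) :
  {subset A <= r} -> #|A| <= size r.
Proof.
by move=> sAr; apply: leq_trans (card_size r); apply/subset_leq_card/subsetP.
Qed.

Section PathTree.
Variables (G : sgraph) (k : nat) (p : nat -> 'I_(vn G)).
Hypothesis p_inj : forall i j, i <= k -> j <= k -> p i = p j -> i = j.

Definition path_set : {set 'I_(vn G)} := [set p i | i : 'I_k.+1].

Definition path_rel : rel 'I_(vn G) := fun x y =>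
  [exists i : 'I_k, ((x == p i) && (y == p i.+1)) || ((x == p i.+1) && (y == p i))].

Lemma path_relP x y :
  reflect (exists2 i, i < k & (x = p i /\ y = p i.+1) \/ (x = p i.+1 /\ y = p i))
          (path_rel x y).
Proof.
apply: (iffP existsP) => [[i /orP[]/andP[/eqP-> /eqP->]]|[i ik [[-> ->]|[-> ->]]]].
- by exists i; [exact: ltn_ord | left].
- by exists i; [exact: ltn_ord | right].
- by exists (Ordinal ik); rewrite !eqxx.
- by exists (Ordinal ik); rewrite !eqxx orbT.
Qed.

Lemma path_rel_sym : symmetric path_rel.
Proof.
by move=> x y; apply/path_relP/path_relP => -[i ik [] [-> ->]]; exists i; auto.
Qed.

Lemma mem_path_set i : i <= k -> p i \in path_set.
Proof. by move=> ik; apply/imsetP; exists (Ordinal (ik : i < k.+1)). Qed.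

Lemma connect_path_rel0 i : i <= k -> connect path_rel (p 0) (p i).
Proof.
elim: i => // i IHi ik; apply: connect_trans (IHi (ltnW ik)) (connect1 _).
by apply/path_relP; exists i => //; left.
Qed.

Lemma path_rel_bridge a b : path_rel a b -> ~~ connect (del_edge path_rel a b) a b.
Proof.
case/path_relP=> i ik eab.
pose A := [pred x | [exists j : 'I_k.+1, (j <= i) && (x == p j)]].
have memA j : j <= k -> (p j \in A) = (j <= i).
  move=> jk; apply/existsP/idP => [[j' /andP[j'i /eqP epj]]|ji].
    by rewrite (p_inj jk _ epj) // -ltnS.
  by exists (Ordinal (jk : j < k.+1)); rewrite ji eqxx.
have clA : closed (del_edge path_rel a b) A.
  move=> x y /andP[/path_relP[j jk exy] not_ab]; have jk' := ltnW jk.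
  have [eq_ji|ne_ji] := eqVneq j i.
    by move: not_ab; case: exy eab => -[-> ->] [] [-> ->]; rewrite eq_ji !eqxx ?orbT.
  by case: exy => -[-> ->]; rewrite !memA //; apply/idP/idP; lia.
apply/negP => /(closed_connect clA).
by case: eab => -[-> ->]; rewrite !memA ?leqnn ?ltnn // ltnW.
Qed.

Definition path_edge (i : nat) : 'I_(vn G) * 'I_(vn G) :=
  if p i < p i.+1 then (p i, p i.+1) else (p i.+1, p i).

Lemma nedges_path_rel : nedges path_rel = k.
Proof.
have neq_step i : i < k -> p i != p i.+1.
  by move=> ik; apply/eqP => /(p_inj (ltnW ik) ik)/n_Sn.
have edgesE : [set q : 'I_(vn G) * 'I_(vn G) | path_rel q.1 q.2 && (q.1 < q.2)]
               = [set path_edge i | i : 'I_k].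
  apply/setP => -[x y]; rewrite inE /=; apply/andP/imsetP.
  - case=> /path_relP[i ik [[-> ->]|[-> ->]]] lt_xy; exists (Ordinal ik) => //.
      by rewrite /path_edge lt_xy.
    by rewrite /path_edge ltnNge (ltnW lt_xy).
  - case=> i _; have ik := ltn_ord i; rewrite /path_edge.
    case: ifP => [lt_i | /negbT ge_i] [-> ->]; split.
    + by apply/path_relP; exists i => //; left.
    + exact: lt_i.
    + by apply/path_relP; exists i => //; right.
    + by rewrite ltn_neqAle eq_sym neq_step // leqNgt.
rewrite /nedges edgesE card_imset ?card_ord // => i j.
have [ik jk] := (ltn_ord i, ltn_ord j); rewrite /path_edge.
by do 2 case: ifP => _; case=> /p_inj e1 /p_inj e2; apply: ord_inj; lia.
Qed.

Hypothesis p_adj : forall i, i < k -> adj G (p i) (p i.+1).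

Lemma path_tree : tree_subgraph G k path_set path_rel.
Proof.
split; split.
- exact: path_rel_sym.
- move=> x y /path_relP[i ik [[-> ->]|[-> ->]]].
    by rewrite p_adj // !mem_path_set // (ltnW ik).
  by rewrite adj_sym p_adj // !mem_path_set // (ltnW ik).
- by apply/set0Pn; exists (p 0); apply: mem_path_set.
- move=> _ _ /imsetP[i _ ->] /imsetP[j _ ->].
  apply: (@connect_trans _ _ (p 0)); last by rewrite connect_path_rel0 // -ltnS.
  by rewrite (sym_connect_sym path_rel_sym) connect_path_rel0 // -ltnS.
- exact: path_rel_bridge.
- exact: nedges_path_rel.
Qed.

End PathTree.

Section GraphOfRel.
Variables (T : finType) (e : rel T).
Hypotheses (e_sym : symmetric e) (e_irr : irreflexive e).

Definition graph_of_rel : sgraph :=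
  @SGraph #|T| (relpre enum_val e) (fun x y => e_sym _ _) (fun x => e_irr _).

Lemma adj_graph_of_rel u v :
  adj graph_of_rel (enum_rank u) (enum_rank v) = e u v.
Proof. by rewrite /= !enum_rankK. Qed.

Lemma deg_graph_of_rel (x : 'I_(vn graph_of_rel)) :
  deg x = #|[set v | e (enum_val x) v]|.
Proof.
rewrite /deg -(card_imset _ enum_val_inj); apply: eq_card => v.
by rewrite -[v]enum_rankK (mem_imset _ _ enum_val_inj) !inE.
Qed.

Lemma connected_graph_of_rel :
  (forall u v, connect e u v) -> connectedG graph_of_rel.
Proof.
move=> conn x y; pose reach := [pred v | connect (adj graph_of_rel) x (enum_rank v)].
have reach_closed : closed e reach.
  move=> u v euv; rewrite !inE; apply/idP/idP => /connect_trans; apply; apply: connect1.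
    by rewrite adj_graph_of_rel.
  by rewrite adj_graph_of_rel e_sym.
have := closed_connect reach_closed (conn (enum_val x) (enum_val y)).
by rewrite !inE !enum_valK connect0.
Qed.

End GraphOfRel.

(* Centres are 'I_t.+1 and blocks 'I_(t.+1 * m).+1, each block a path on 'I_l.+1;
   the theorem takes m = s - 1 and l = k - 1. *)
Section BlockGraph.
Variables (m l t : nat).

Definition block_vertex : finType := ('I_t.+1 + 'I_(t.+1 * m).+1 * 'I_l.+1)%type.

Definition attached (c : 'I_t.+1) (b : 'I_(t.+1 * m).+1) : bool :=
  c * m <= b <= c * m + m.

Definition block_adj : rel block_vertex := fun u v =>
  match u, v with
  | inl c, inr (b, j) | inr (b, j), inl c => (j == ord0) && attached c b
  | inr (b, i), inr (b', j) => (b == b') && ((i.+1 == j) || (j.+1 == i))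
  | inl _, inl _ => false
  end.

Lemma block_adj_sym : symmetric block_adj.
Proof. by move=> [c|[b i]] [c'|[b' j]] //=; rewrite [b == _]eq_sym orbC. Qed.

Lemma block_adj_irr : irreflexive block_adj.
Proof. by move=> [c|[b i]] //=; rewrite eqxx orbb gtn_eqF. Qed.

Definition block_graph : sgraph := graph_of_rel block_adj_sym block_adj_irr.

Lemma card_block_vertex : #|block_vertex| = l.+1 + (m * l.+1).+1 * t.+1.
Proof. by rewrite card_sum card_prod !card_ord; ring. Qed.

Definition block_seg (b : 'I_(t.+1 * m).+1) (i : nat) : block_vertex := inr (b, inord i).

Lemma block_seg_inj b i j : i <= l -> j <= l -> block_seg b i = block_seg b j -> i = j.
Proof. by move=> il jl [/(congr1 (@nat_of_ord _))]; rewrite !inordK. Qed.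

Lemma block_seg_adj b i : i < l -> block_adj (block_seg b i) (block_seg b i.+1).
Proof. by move=> il; rewrite /= eqxx !inordK ?eqxx // ltnW. Qed.

Definition block_root : block_vertex := inr (ord0, ord0).

Lemma connect_block_seg b j : connect block_adj (inr (b, j)) (inr (b, ord0)).
Proof.
rewrite -[j]inord_val; elim: (nat_of_ord j) (ltn_ord j) => [|i IHi] il.
  by rewrite inord0; apply: connect0.
apply: connect_trans _ (IHi (ltnW il)); apply: connect1.
by rewrite block_adj_sym block_seg_adj.
Qed.

Lemma connect_center_root (c : 'I_t.+1) : connect block_adj (inl c) block_root.
Proof.
rewrite -[c]inord_val; elim: (nat_of_ord c) (ltn_ord c) => [|d IHd] dt.
  by apply: connect1; rewrite /= /attached inordK.
have dm : d.+1 * m < (t.+1 * m).+1 by rewrite ltnS leq_mul2r (ltnW dt) orbT.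
apply: (@connect_trans _ _ (inr (inord (d.+1 * m), ord0))).
  by apply: connect1; rewrite /= /attached (inordK dm) (inordK dt) leqnn leq_addr.
apply: connect_trans _ (IHd (ltnW dt)); apply: connect1.
by rewrite /= /attached (inordK dm) (inordK (ltnW dt)) mulSn [m + _]addnC leq_addr leqnn.
Qed.

Hypothesis m_gt0 : 0 < m.

Lemma connect_block_root b j : connect block_adj (inr (b, j)) block_root.
Proof.
apply: connect_trans (connect_block_seg b j) _.
have [b0|b_gt0] := posnP b.
  by rewrite (_ : b = ord0); [exact: connect0 | exact: val_inj].
(* A block b > 0 hangs off the centre (b - 1) %/ m. *)
have ct : b.-1 %/ m < t.+1 by rewrite ltn_divLR // -ltnS prednK // ltn_ord.
apply: connect_trans (connect_center_root (inord (b.-1 %/ m))).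
apply: connect1; rewrite /= /attached inordK //.
rewrite (leq_trans (leq_trunc_div _ _) (leq_pred _)) /=.
by rewrite -mulSnr -[X in X <= _](prednK b_gt0) ltn_ceil.
Qed.

Lemma connect_block_adj u v : connect block_adj u v.
Proof.
have to_root w : connect block_adj w block_root.
  by case: w => [c|[b j]]; [exact: connect_center_root | exact: connect_block_root].
by rewrite (connect_trans (to_root u)) // (sym_connect_sym block_adj_sym) to_root.
Qed.

Lemma card_center_neighbors (c : 'I_t.+1) : #|[set v | block_adj (inl c) v]| <= m.+1.
Proof.
suff sub : {subset [set v | block_adj (inl c) v]
              <= [seq inr (inord (c * m + i), ord0) | i <- iota 0 m.+1]}.
  by have := subset_leq_card_size sub; rewrite size_map size_iota.
move=> [c'|[b j]]; rewrite inE // => /andP[/eqP-> /andP[cb bc]].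
apply/mapP; exists (b - c * m); first by rewrite mem_iota /=; lia.
by rewrite subnKC // inord_val.
Qed.

Lemma card_block_neighbors b j : #|[set v | block_adj (inr (b, j)) v]| <= 3.
Proof.
have [->|j_gt0] := eqVneq j ord0.
  suff sub : {subset [set v | block_adj (inr (b, ord0)) v]
                <= [:: inr (b, inord 1); inl (inord (b %/ m)); inl (inord (b %/ m).-1)]}.
    exact: subset_leq_card_size sub.
  move=> [c|[b' j']]; rewrite inE /=.
  - move=> /andP[cb bc].
    have : c = b %/ m :> nat \/ c = (b %/ m).-1 :> nat.
      have le1 : c <= b %/ m by rewrite leq_divRL.
      have le2 : b %/ m <= c.+1 by have := leq_div2r m bc; rewrite -mulSnr mulnK.
      lia.
    by case=> <-; rewrite inord_val !inE eqxx ?orbT.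
  - move=> /andP[/eqP<- /orP[/eqP j'E|//]].
    by rewrite -[j']inord_val -j'E !inE eqxx.
suff sub : {subset [set v | block_adj (inr (b, j)) v]
              <= [:: inr (b, inord j.+1); inr (b, inord j.-1)]}.
  exact: leq_trans (subset_leq_card_size sub) _.
move=> [c|[b' j']]; rewrite inE /= ?(negbTE j_gt0) //.
by move=> /andP[/eqP<- /orP[]/eqP j'E]; rewrite -[j']inord_val -j'E !inE eqxx ?orbT.
Qed.

Definition center_block (c : 'I_t.+1) : 'I_(t.+1 * m).+1 := inord (c * m).

Lemma center_blockE c : center_block c = c * m :> nat.
Proof. by rewrite inordK // ltnS leq_mul2r ltnW ?orbT. Qed.

Lemma attached_center_block c : attached c (center_block c).
Proof. by rewrite /attached center_blockE leqnn leq_addr. Qed.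

Hypothesis l_gt0 : 0 < l.

Lemma block_adj_neighbor u : exists v, block_adj u v.
Proof.
case: u => [c|[b j]].
  by exists (inr (center_block c, ord0)); rewrite /= attached_center_block.
have [j0|j_gt0] := posnP j.
  by exists (inr (b, inord 1)); rewrite /= eqxx inordK ?ltnS // j0.
by exists (inr (b, inord j.-1)); rewrite /= eqxx inordK ?prednK ?eqxx ?orbT // ltnW.
Qed.

Lemma block_graph_in_class : in_class 1 (maxn 3 m.+1) block_graph.
Proof.
move=> x; rewrite deg_graph_of_rel; apply/andP; split.
  have [v xv] := block_adj_neighbor (enum_val x).
  by apply/card_gt0P; exists v; rewrite inE.
case: (enum_val x) => [c|[b j]]; rewrite leq_max.
  by rewrite card_center_neighbors orbT.
by rewrite card_block_neighbors.
Qed.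

Definition center_path (c : 'I_t.+1) (i : nat) : block_vertex :=
  if i is j.+1 then block_seg (center_block c) j else inl c.

Lemma center_path_inj c i j :
  i <= l.+1 -> j <= l.+1 -> center_path c i = center_path c j -> i = j.
Proof. by case: i j => [|i] [|j] //= il jl /block_seg_inj ->. Qed.

Lemma center_path_adj c i : i < l.+1 -> block_adj (center_path c i) (center_path c i.+1).
Proof.
case: i => [|i] il; last exact: block_seg_adj.
by rewrite /= inord0 eqxx attached_center_block.
Qed.

Lemma center_path_center c c' i j : center_path c i = center_path c' j -> c = c'.
Proof.
case: i j => [|i] [|j] //= [] // /(congr1 (@nat_of_ord _)).
by rewrite !center_blockE => /eqP; rewrite eqn_pmul2r // => /eqP/ord_inj.
Qed.

Lemma block_graph_packing : has_tree_packing block_graph l.+1 t.+1.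
Proof.
pose p c i : 'I_(vn block_graph) := enum_rank (center_path c i).
exists (fun c => path_set l.+1 (p c)), (fun c => path_rel l.+1 (p c)); split.
  move=> c; apply: path_tree => [i j il jl /enum_rank_inj|i il].
    exact: center_path_inj.
  by rewrite adj_graph_of_rel center_path_adj.
move=> c c' neq_cc'; rewrite disjoint_subset; apply/subsetP => _ /imsetP[i _ ->].
rewrite inE; apply/imsetP => -[j _ /enum_rank_inj/center_path_center eq_cc'].
by rewrite eq_cc' eqxx in neq_cc'.
Qed.

Lemma tree_meets_center S E :
  tree_subgraph block_graph l.+1 S E -> exists c, enum_rank (inl c) \in S.
Proof.
case=> -[_ E_adj] [/set0Pn[x0 x0S] S_conn _ nE].
case: (pickP [pred c | enum_rank (inl c) \in S]) => [c cS|no_c]; first by exists c.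
have S_block x : x \in S -> exists b j, enum_val x = inr (b, j).
  move=> xS; case ex: (enum_val x) => [c|[b j]]; last by exists b, j.
  by move: (no_c c); rewrite /= -ex enum_valK xS.
have [b0 [j0 ex0]] := S_block _ x0S.
pose in_b0 := [pred x : 'I_(vn block_graph) |
                if enum_val x is inr (b, _) then b == b0 else false].
have in_b0_closed : closed E in_b0.
  move=> x y /E_adj /and3P[/= xy /S_block[b [i ex]] /S_block[b' [j ey]]].
  by move: xy; rewrite !inE ex ey /= => /andP[/eqP-> _].
have S_b0 x : x \in S -> x \in in_b0.
  by move=> xS; rewrite -(closed_connect in_b0_closed (S_conn _ _ x0S xS)) inE ex0.
pose q i : 'I_(vn block_graph) := enum_rank (block_seg b0 i).
have qE x i (j : 'I_l.+1) : j = i :> nat -> enum_val x = inr (b0, j) -> x = q i.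
  by move=> <- ex; rewrite /q /block_seg inord_val -ex enum_valK.
have E_sub : subrel E (path_rel l q).
  move=> x y exy; case/and3P: (E_adj _ _ exy) => /= xy xS yS.
  have [b [i ex]] := S_block _ xS; have [b' [j ey]] := S_block _ yS.
  move: (S_b0 _ xS) xy; rewrite inE ex ey /= => /eqP eb /andP[/eqP eb' /orP[]/eqP ij];
    subst b b'; apply/path_relP.
  - exists i; first by rewrite -ltnS ij ltn_ord.
    by left; split; [apply: qE ex | apply: qE ey].
  - exists j; first by rewrite -ltnS ij ltn_ord.
    by right; split; [apply: qE ex | apply: qE ey].
have q_inj i j : i <= l -> j <= l -> q i = q j -> i = j.
  by move=> il jl /enum_rank_inj/block_seg_inj; apply.
by have := nedges_subrel E_sub; rewrite nedges_path_rel // nE ltnn.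
Qed.

Lemma tree_packing_le t' : has_tree_packing block_graph l.+1 t' -> t' <= t.+1.
Proof.
case=> S [E [S_tree S_disj]].
have /fin_all_exists[h hS] : forall i, exists c, enum_rank (inl c) \in S i.
  by move=> i; apply: tree_meets_center (S_tree i).
suff /leq_card : injective h by rewrite !card_ord.
move=> i j hij; apply/eqP; apply: contraT => neq_ij.
by have := disjointFr (S_disj _ _ neq_ij) (hS i); rewrite hij hS.
Qed.

Lemma tau_block_graph : is_tau block_graph l.+1 t.+1.
Proof. by split; [exact: block_graph_packing | exact: tree_packing_le]. Qed.

End BlockGraph.

Local Open Scope ring_scope.

Theorem theorem1p10 (s k : nat) :
  (3 <= s)%N -> (2 <= k)%N ->
  exists Gs : nat -> sgraph,
    (forall i j : nat, i <> j -> ~ isomorphic (Gs i) (Gs j)) /\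
    (forall i : nat,
       connectedG (Gs i) /\ in_class 1 s (Gs i) /\ vn (Gs i) <> k /\
       exists t : nat, is_tau (Gs i) k t /\
         ((s * k - k + 1)%N%:Z * t%:Z = (vn (Gs i))%:Z - k%:Z :> int)).
Proof.
case: s => [|m] // s_ge3; case: k => [|l] // k_ge2.
have [m_gt0 l_gt0] : (0 < m)%N /\ (0 < l)%N by split; [exact: ltnW s_ge3 | exact: k_ge2].
exists (block_graph m l); split.
  move=> i j neq_ij /isomorphic_vn; rewrite /= !card_block_vertex => /eqP.
  by rewrite eqn_add2l eqn_pmul2l // => /eqP[].
move=> i; split; first by apply: connected_graph_of_rel; apply: connect_block_adj.
split; first by rewrite -(maxn_idPr s_ge3); apply: block_graph_in_class.
split.
  by rewrite /= card_block_vertex -[X in _ <> X]addn0 => /addnI/eqP; rewrite muln_eq0.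
exists i.+1; split; first exact: tau_block_graph.
by rewrite /= card_block_vertex mulSn addKn addn1; lia.
Qed.
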